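(* Assume (A2). Let $\{\alpha_k\},\{\beta_k\}$ be nonnegative, nonincreasing step sizes and $\mathcal K^*$ as in the context. Then for all $k\ge\mathcal K^*$, $$\left\|\begin{bmatrix}\epsilon_k\\ \psi_k\end{bmatrix}\right\|\le\frac{8\lambda_1+1}{2\lambda_1}\|\hat Z_k\|+\frac{(8\lambda_1+1)(2B+\|Y^*\|)}{2\lambda_1^2}.$$
   Context: Let $n\ge1$; $\|\cdot\|$ is the Euclidean norm / spectral norm. Let $\{\xi_k\}_{k\ge0}$ be a Markov chain with state space $\mathcal S$, and for $i,j\in\{1,2\}$ let $A_{ij}(\xi)\in\mathbb R^{n\times n}$, $b_i(\xi)\in\mathbb R^n$. The linear two-time-scale stochastic approximation, from arbitrary $X_0,Y_0$, is $X_{k+1}=X_k-\alpha_k(A_{11}(\xi_k)X_k+A_{12}(\xi_k)Y_k-b_1(\xi_k))$, $Y_{k+1}=Y_k-\beta_k(A_{21}(\xi_k)X_k+A_{22}(\xi_k)Y_k-b_2(\xi_k))$. Standing setting: the limits $\bar A_{ij}=\lim_k\mathbb E[A_{ij}(\xi_k)]$, $\bar b_i=\lim_k\mathbb E[b_i(\xi_k)]$ exist; $\bar A_{11}$ and $\Delta=\bar A_{22}-\bar A_{21}\bar A_{11}^{-1}\bar A_{12}$ satisfy $x^T\bar A_{11}x>0$, $x^T\Delta x>0$ for $x\neq0$; for $\alpha>0$, $\tau(\alpha)$ is a mixing time: $\|\mathbb E[A_{ij}(\xi_k)\mid\xi_0=\xi]-\bar A_{ij}\|\le\alpha$, $\|\mathbb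 E[b_i(\xi_k)\mid\xi_0=\xi]-\bar b_i\|\le\alpha$ for all $i,j,\xi$, $k\ge\tau(\alpha)$, with $\tau(\alpha)=C\log(1/\alpha)$. (A2): there is $B>0$ with $\|b_i(\xi)\|\le B$ and $\|A_{ij}(\xi)\|\le1/4$ for all $i,j,\xi$. Notation: $(X^*,Y^* )$ solves $\bar A_{11}X^*+\bar A_{12}Y^*=\bar b_1$, $\bar A_{21}X^*+\bar A_{22}Y^*=\bar b_2$; $\hat X_k=X_k-\bar A_{11}^{-1}(\bar b_1-\bar A_{12}Y_k)$, $\hat Y_k=Y_k-Y^*$, $\hat Z_k=[\hat X_k^T,\hat Y_k^T]^T$; $\lambda_1$ is the smallest singular value of $\bar A_{11}$. Noise: $\epsilon_k=A_{11}(\xi_k)X_k+A_{12}(\xi_k)Y_k-b_1(\xi_k)-(\bar A_{11}X_k+\bar A_{12}Y_k-\bar b_1)$ and $\psi_k=A_{21}(\xi_k)X_k+A_{22}(\xi_k)Y_k-b_2(\xi_k)-(\bar A_{21}X_k+\bar A_{22}Y_k-\bar b_2)$. $\mathcal K^*$ is a positive integer with $\sum_{t=k-\tau(\alpha_k)}^{k}\alpha_t\le\tau(\alpha_k)\alpha_{k-\tau(\alpha_k)}\le\log2$ for all $k\ge\mathcal K^*$. *)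

From HB Require Import structures.
From mathcomp Require Import all_boot all_order all_algebra.
From mathcomp Require Import all_classical all_reals all_analysis.

Set Implicit Arguments.
Unset Strict Implicit.
Unset Printing Implicit Defensive.
Import Order.TTheory GRing.Theory Num.Theory.
Import numFieldNormedType.Exports.
Local Open Scope classical_set_scope.
Local Open Scope ring_scope.

Section Defs.
Variable R : realType.

Definition vnorm (m : nat) (v : 'cV[R]_m) : R :=
  Num.sqrt (\sum_(i < m) (v i 0) ^+ 2).

Definition opnorm (m p : nat) (A : 'M[R]_(m, p)) : R :=
  sup [set vnorm (A *m x) | x in [set x : 'cV[R]_p | vnorm x <= 1]].

Definition smallest_sv (n : nat) (A : 'M[R]_n) : R :=
  inf [set vnorm (A *m x) | x in [set x : 'cV[R]_n | vnorm x = 1]].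

Definition mexpect d (S : measurableType d) (mu : {measure set S -> \bar R})
  (m p : nat) (F : S -> 'M[R]_(m, p)) : 'M[R]_(m, p) :=
  \matrix_(i, j) (\int[mu]_(s in setT) F s i j).

Fixpoint tts_iter (S : Type) (n : nat)
  (A11 A12 A21 A22 : S -> 'M[R]_n) (b1 b2 : S -> 'cV[R]_n)
  (alpha beta : nat -> R) (xi : nat -> S) (X0 Y0 : 'cV[R]_n) (k : nat)
  : 'cV[R]_n * 'cV[R]_n :=
  match k with
  | 0%N => (X0, Y0)
  | k'.+1 =>
    let XY := tts_iter A11 A12 A21 A22 b1 b2 alpha beta xi X0 Y0 k' in
    let X := XY.1 in let Y := XY.2 in
    (X - alpha k' *: (A11 (xi k') *m X + A12 (xi k') *m Y - b1 (xi k')),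
     Y - beta k' *: (A21 (xi k') *m X + A22 (xi k') *m Y - b2 (xi k')))
  end.

End Defs.

From HB Require Import structures.
From mathcomp Require Import all_boot all_order all_algebra.
From mathcomp Require Import all_classical all_reals all_analysis.
From mathcomp Require Import ring lra.
Import Order.TTheory GRing.Theory Num.Theory.
Import numFieldNormedType.Exports.
Set Implicit Arguments.
Unset Strict Implicit.
Unset Printing Implicit Defensive.
Local Open Scope classical_set_scope.
Local Open Scope ring_scope.

(* Every A_ij(xi) has operator norm at most 1/4, and so does every Abar_ij: by the mixing
   bound it is an operator-norm limit of expectations E[A_ij], and averaging does not
   increase the operator norm; likewise |bbar_i| <= B.  Hence
   |(eps, psi)| <= |X| + |Y| + 4B.  Finally Y = Yhat + Y* and
   X = Xhat + Abar11^-1 (bbar1 - Abar12 Y), where |Abar11^-1 v| <= |v| / lam1 with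
   0 < lam1 <= |Abar11| <= 1/4 since Abar11 is positive definite. *)

Section EuclideanNorm.
Variable R : realType.

Lemma sum_mul_sqr_le m (f g : 'I_m -> R) :
  (\sum_i f i * g i) ^+ 2 <= (\sum_i f i ^+ 2) * (\sum_i g i ^+ 2).
Proof.
set a := \sum_i f i ^+ 2; set b := \sum_i f i * g i; set c := \sum_i g i ^+ 2.
have a_ge0 : 0 <= a by apply: sumr_ge0 => i _; exact: sqr_ge0.
have [a0|a_neq0] := eqVneq a 0.
  have f0 i : f i = 0.
    by apply/eqP; rewrite -sqrf_eq0; apply/eqP/(psumr_eq0P _ a0) => // j _; exact: sqr_ge0.
  by rewrite /b big1 ?expr0n ?a0 ?mul0r // => i _; rewrite f0 mul0r.
have a_gt0 : 0 < a by rewrite lt_def a_neq0.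
have : 0 <= \sum_i (a * g i - b * f i) ^+ 2 by apply: sumr_ge0 => i _; exact: sqr_ge0.
have -> : \sum_i (a * g i - b * f i) ^+ 2 = a * (a * c - b ^+ 2).
  transitivity (\sum_i (a ^+ 2 * g i ^+ 2 + b ^+ 2 * f i ^+ 2 - 2 * a * b * (f i * g i))).
    by apply: eq_bigr => i _; ring.
  by rewrite sumrB big_split /= -!mulr_sumr -/a -/b -/c; ring.
by rewrite pmulr_rge0 // subr_ge0.
Qed.

Lemma vnorm_ge0 m (v : 'cV[R]_m) : 0 <= vnorm v.
Proof. exact: sqrtr_ge0. Qed.

Lemma vnorm_sqr m (v : 'cV[R]_m) : vnorm v ^+ 2 = \sum_i v i 0 ^+ 2.
Proof. by apply/sqr_sqrtr/sumr_ge0 => i _; exact: sqr_ge0. Qed.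

Lemma vnorm_le_sqr m (v : 'cV[R]_m) c :
  0 <= c -> (vnorm v <= c) = (\sum_i v i 0 ^+ 2 <= c ^+ 2).
Proof. by move=> c0; rewrite /vnorm -{1}(ger0_norm c0) -sqrtr_sqr ler_sqrt ?sqr_ge0. Qed.

Lemma sum_mul_le_vnorm m (u v : 'cV[R]_m) : \sum_i u i 0 * v i 0 <= vnorm u * vnorm v.
Proof.
have sum_sqr_ge0 (w : 'cV[R]_m) : 0 <= \sum_i w i 0 ^+ 2.
  by apply: sumr_ge0 => i _; exact: sqr_ge0.
rewrite /vnorm -sqrtrM //; apply: le_trans (ler_norm _) _.
by rewrite -sqrtr_sqr ler_sqrt ?sum_mul_sqr_le ?mulr_ge0.
Qed.

Lemma vnormD m (u v : 'cV[R]_m) : vnorm (u + v) <= vnorm u + vnorm v.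
Proof.
rewrite vnorm_le_sqr ?addr_ge0 ?vnorm_ge0 //.
have -> : \sum_i (u + v) i 0 ^+ 2
    = \sum_i u i 0 ^+ 2 + 2 * \sum_i u i 0 * v i 0 + \sum_i v i 0 ^+ 2.
  by rewrite mulr_sumr -!big_split /=; apply: eq_bigr => i _; rewrite !mxE; ring.
by rewrite -!vnorm_sqr sqrrD lerD2 lerD2l mulr_natl ler_pMn2r ?sum_mul_le_vnorm.
Qed.

Lemma vnormZ m a (v : 'cV[R]_m) : vnorm (a *: v) = `|a| * vnorm v.
Proof.
rewrite /vnorm -sqrtr_sqr -sqrtrM ?sqr_ge0 // mulr_sumr; congr Num.sqrt.
by apply: eq_bigr => i _; rewrite !mxE exprMn.
Qed.

Lemma vnorm0 m : vnorm (0 : 'cV[R]_m) = 0.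
Proof. by rewrite -(scale0r (0 : 'cV[R]_m)) vnormZ normr0 mul0r. Qed.

Lemma vnormN m (v : 'cV[R]_m) : vnorm (- v) = vnorm v.
Proof. by rewrite -scaleN1r vnormZ normrN normr1 mul1r. Qed.

Lemma vnormB m (u v : 'cV[R]_m) : vnorm (u - v) <= vnorm u + vnorm v.
Proof. by rewrite -(vnormN v) vnormD. Qed.

Lemma vnorm_eq0 m (v : 'cV[R]_m) : (vnorm v == 0) = (v == 0).
Proof.
apply/eqP/eqP => [v0|->]; last exact: vnorm0.
have sum0 : \sum_i v i 0 ^+ 2 = 0 by rewrite -vnorm_sqr v0 expr0n.
apply/matrixP => i j; rewrite (ord1 j) mxE; apply/eqP; rewrite -sqrf_eq0.
by apply/eqP/(psumr_eq0P _ sum0) => // k _; exact: sqr_ge0.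
Qed.

Lemma normr_entry_le_vnorm m (v : 'cV[R]_m) i j : `|v i j| <= vnorm v.
Proof.
rewrite (ord1 j) -sqrtr_sqr ler_sqrt ?sumr_ge0 // => [|k _]; last exact: sqr_ge0.
by rewrite (bigD1 i) //= lerDl sumr_ge0 // => k _; exact: sqr_ge0.
Qed.

Lemma vnorm_delta_mx m (i : 'I_m) : vnorm (delta_mx i 0 : 'cV[R]_m) = 1.
Proof.
rewrite /vnorm (bigD1 i) //= big1 ?addr0 => [|k /negbTE ki].
  by rewrite mxE !eqxx expr1n sqrtr1.
by rewrite mxE ki expr0n.
Qed.

Lemma vnorm_col_mx_sqr m1 m2 (u : 'cV[R]_m1) (v : 'cV[R]_m2) :
  vnorm (col_mx u v) ^+ 2 = vnorm u ^+ 2 + vnorm v ^+ 2.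
Proof.
rewrite !vnorm_sqr big_split_ord /=.
by congr (_ + _); apply: eq_bigr => i _; rewrite ?col_mxEu ?col_mxEd.
Qed.

Lemma vnorm_col_mx_le m1 m2 (u : 'cV[R]_m1) (v : 'cV[R]_m2) :
  [/\ vnorm u <= vnorm (col_mx u v), vnorm v <= vnorm (col_mx u v)
    & vnorm (col_mx u v) <= vnorm u + vnorm v].
Proof.
have := vnorm_col_mx_sqr u v.
have := vnorm_ge0 u; have := vnorm_ge0 v; have := vnorm_ge0 (col_mx u v).
by split; nra.
Qed.

End EuclideanNorm.

Section OperatorNorm.
Variable R : realType.

Lemma vnorm_mulmx_le_frobenius m p (M : 'M[R]_(m, p)) x :
  vnorm (M *m x) <= Num.sqrt (\sum_i \sum_j M i j ^+ 2) * vnorm x.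
Proof.
rewrite vnorm_le_sqr ?mulr_ge0 ?sqrtr_ge0 ?vnorm_ge0 // exprMn sqr_sqrtr; last first.
  by apply: sumr_ge0 => i _; apply: sumr_ge0 => j _; exact: sqr_ge0.
rewrite vnorm_sqr mulr_suml; apply: ler_sum => i _; rewrite mxE.
exact: (sum_mul_sqr_le (fun j => M i j) (fun j => x j 0)).
Qed.

Lemma vnorm_mulmx_le_opnorm m p (M : 'M[R]_(m, p)) x :
  vnorm x <= 1 -> vnorm (M *m x) <= opnorm M.
Proof.
move=> x_le1; apply: ub_le_sup; last by exists x.
exists (Num.sqrt (\sum_i \sum_j M i j ^+ 2)) => _ [y y_le1 <-].
apply: le_trans (vnorm_mulmx_le_frobenius M y) _.
by rewrite ler_piMr ?sqrtr_ge0.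
Qed.

Lemma opnorm_ge0 m p (M : 'M[R]_(m, p)) : 0 <= opnorm M.
Proof.
by have := vnorm_mulmx_le_opnorm M (x := 0); rewrite mulmx0 !vnorm0 ler01; apply.
Qed.

Lemma vnorm_mulmx_opnorm m p (M : 'M[R]_(m, p)) x :
  vnorm (M *m x) <= opnorm M * vnorm x.
Proof.
have [/eqP|x_neq0] := eqVneq (vnorm x) 0.
  by rewrite vnorm_eq0 => /eqP->; rewrite mulmx0 !vnorm0 mulr0.
have x_gt0 : 0 < vnorm x by rewrite lt_def x_neq0 vnorm_ge0.
have := vnorm_mulmx_le_opnorm M (x := (vnorm x)^-1 *: x).
rewrite -scalemxAr !vnormZ ger0_norm ?invr_ge0 ?vnorm_ge0 // mulVf // lexx.
by rewrite ler_pdivrMl // mulrC => /(_ isT).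
Qed.

Lemma opnorm_le m p (M : 'M[R]_(m, p)) c :
  0 <= c -> (forall x, vnorm x <= 1 -> vnorm (M *m x) <= c) -> opnorm M <= c.
Proof.
move=> c_ge0 Mc; apply: ge_sup => [|_ [x x_le1 <-]]; last exact: Mc.
by exists (vnorm (M *m 0)), 0; rewrite //= vnorm0 ler01.
Qed.

Lemma opnormB m p (M N : 'M[R]_(m, p)) : opnorm (M - N) <= opnorm M + opnorm N.
Proof.
apply: opnorm_le => [|x x_le1]; first by rewrite addr_ge0 ?opnorm_ge0.
rewrite mulmxBl; apply: le_trans (vnormB _ _) _.
by rewrite lerD ?vnorm_mulmx_le_opnorm.
Qed.

Lemma normr_entry_le_opnorm m p (M : 'M[R]_(m, p)) i j : `|M i j| <= opnorm M.
Proof.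
have -> : M i j = (M *m (delta_mx j 0 : 'cV_p)) i 0.
  rewrite mxE (bigD1 j) //= big1 => [|k /negbTE kj]; first by rewrite mxE !eqxx mulr1 addr0.
  by rewrite mxE kj mulr0.
apply: le_trans (normr_entry_le_vnorm _ _ _) _.
by rewrite vnorm_mulmx_le_opnorm ?vnorm_delta_mx.
Qed.

Lemma smallest_sv_le m (A : 'M[R]_m) e : vnorm e = 1 -> smallest_sv A <= vnorm (A *m e).
Proof.
move=> e1; apply: ge_inf; last by exists e.
by exists 0 => _ [y _ <-]; exact: vnorm_ge0.
Qed.

Lemma smallest_sv_le_opnorm m (A : 'M[R]_m) : (0 < m)%N -> smallest_sv A <= opnorm A.
Proof.
move=> m_gt0; have e1 := vnorm_delta_mx R (Ordinal m_gt0).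
by apply: le_trans (smallest_sv_le A e1) _; rewrite vnorm_mulmx_le_opnorm ?e1.
Qed.

Lemma smallest_sv_mul_le m (A : 'M[R]_m) x : smallest_sv A * vnorm x <= vnorm (A *m x).
Proof.
have [->|x_neq0] := eqVneq (vnorm x) 0; first by rewrite mulr0 vnorm_ge0.
have x_gt0 : 0 < vnorm x by rewrite lt_def x_neq0 vnorm_ge0.
have := smallest_sv_le A (e := (vnorm x)^-1 *: x).
rewrite -scalemxAr !vnormZ ger0_norm ?invr_ge0 ?vnorm_ge0 // mulVf //.
by rewrite ler_pdivlMl // mulrC => /(_ erefl).
Qed.

(* [|x| = |A^-1 (A x)| <= opnorm A^-1 * |A x|], so [1 / opnorm A^-1] bounds [smallest_sv A] below. *)
Lemma smallest_sv_gt0 m (A : 'M[R]_m) : (0 < m)%N -> A \in unitmx -> 0 < smallest_sv A.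
Proof.
move=> m_gt0 A_unit.
have inv_bound x : vnorm x <= opnorm (invmx A) * vnorm (A *m x).
  by rewrite -{1}(mulKmx A_unit x); exact: vnorm_mulmx_opnorm.
pose e : 'cV[R]_m := delta_mx (Ordinal m_gt0) 0.
have inv_gt0 : 0 < opnorm (invmx A).
  rewrite lt_def opnorm_ge0 andbT; apply/eqP => inv0.
  by have := inv_bound e; rewrite vnorm_delta_mx inv0 mul0r ler10.
apply: (@lt_le_trans _ _ (opnorm (invmx A))^-1); first by rewrite invr_gt0.
apply: lb_le_inf => [|_ [y y1 <-]]; first by exists (vnorm (A *m e)), e; rewrite /= ?vnorm_delta_mx.
by rewrite -(ler_pM2l inv_gt0) mulfV ?gt_eqF // -y1 inv_bound.
Qed.

Lemma posdef_unitmx m (A : 'M[R]_m) :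
  (forall x : 'cV[R]_m, x != 0 -> 0 < (x^T *m A *m x) 0 0) -> A \in unitmx.
Proof.
move=> A_posdef; rewrite unitmxE unitfE; apply/det0P => -[v v_neq0 vA0].
have := A_posdef v^T; rewrite trmx_eq0 trmxK vA0 mul0mx mxE ltxx.
by move/(_ v_neq0).
Qed.

End OperatorNorm.

Section Expectation.
Context d (S : measurableType d) (R : realType).
Variable mu : {measure set S -> \bar R}.

Lemma integrable_RZl (D : set S) (f : S -> R) r : measurable D ->
  mu.-integrable D (EFin \o f) -> mu.-integrable D (EFin \o (fun s => r * f s)).
Proof.
by move=> mD f_int; apply: eq_integrable (integrableZl mD r f_int) => // s _; rewrite /= EFinM.
Qed.

Lemma integrable_Rsum (D : set S) (I : Type) (r : seq I) (h : I -> S -> R) :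
  measurable D -> (forall i, mu.-integrable D (EFin \o h i)) ->
  mu.-integrable D (EFin \o (fun s => \sum_(i <- r) h i s)).
Proof.
move=> mD h_int.
apply: eq_integrable (integrable_sum mD r (fun i _ => h_int i)) => // s _.
by rewrite /= sumEFin.
Qed.

Lemma Rintegral_sum (D : set S) (I : Type) (r : seq I) (h : I -> S -> R) :
  measurable D -> (forall i, mu.-integrable D (EFin \o h i)) ->
  \int[mu]_(s in D) \sum_(i <- r) h i s = \sum_(i <- r) \int[mu]_(s in D) h i s.
Proof.
move=> mD h_int; rewrite /Rintegral.
under eq_integral do rewrite -sumEFin.
rewrite integral_sum // sum_fine // => i _.
by have := integrable_fin_num mD (h_int i).
Qed.

Lemma measurable_mulmx_entry m p q (F : S -> 'M[R]_(m, p)) (x : 'M[R]_(p, q)) i j :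
  (forall i j, measurable_fun setT (fun s => F s i j)) ->
  measurable_fun setT (fun s => (F s *m x) i j).
Proof.
move=> mF; under eq_fun do rewrite mxE.
by apply: measurable_sum => k; apply: measurable_realfun.measurable_funM => //; exact: measurable_cst.
Qed.

Lemma mexpect_mulmx m p q (F : S -> 'M[R]_(m, p)) (x : 'M[R]_(p, q)) :
  (forall i j, mu.-integrable setT (EFin \o (fun s => F s i j))) ->
  mexpect mu F *m x = mexpect mu (fun s => F s *m x).
Proof.
move=> F_int; apply/matrixP => i j; rewrite !mxE.
under [RHS]eq_Rintegral do rewrite mxE; under [RHS]eq_Rintegral do under eq_bigr do rewrite mulrC.
rewrite Rintegral_sum // => [|k]; last exact: integrable_RZl.
by apply: eq_bigr => k _; rewrite mxE RintegralZl // mulrC.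
Qed.

Hypothesis mu_setT : mu setT = 1%E.

Lemma integrable_bounded (f : S -> R) c :
  measurable_fun setT f -> (forall s, `|f s| <= c) -> mu.-integrable setT (EFin \o f).
Proof.
move=> mf fc; apply: measurable_bounded_integrable => //; first by rewrite mu_setT ltry.
exists c; split; first exact: num_real.
by move=> M cM s _; exact: le_trans (fc s) (ltW cM).
Qed.

(* [|E G|^2 = E <E G, G> <= |E G| c] by Cauchy-Schwarz under the integral. *)
Lemma vnorm_mexpect_le m (G : S -> 'cV[R]_m) c :
  0 <= c -> (forall i j, measurable_fun setT (fun s => G s i j)) ->
  (forall s, vnorm (G s) <= c) -> vnorm (mexpect mu G) <= c.
Proof.
move=> c_ge0 mG Gc; set v := mexpect mu G.
have G_int i : mu.-integrable setT (EFin \o (fun s => G s i 0)).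
  exact: integrable_bounded (mG i 0) (fun s => le_trans (normr_entry_le_vnorm _ _ _) (Gc s)).
have vG_int : mu.-integrable setT (EFin \o (fun s => \sum_i v i 0 * G s i 0)).
  by apply: integrable_Rsum => // i; exact: integrable_RZl.
have : vnorm v ^+ 2 <= vnorm v * c.
  have -> : vnorm v ^+ 2 = \int[mu]_(s in setT) \sum_i v i 0 * G s i 0.
    rewrite vnorm_sqr Rintegral_sum // => [|i]; last exact: integrable_RZl.
    by apply: eq_bigr => i _; rewrite RintegralZl // {2}/v mxE expr2.
  rewrite -[vnorm v * c]mulr1 -[1]/(fine 1%E) -mu_setT -Rintegral_cst //.
  apply: le_Rintegral => // [|s _]; first exact: integrable_bounded (measurable_cst _) (fun=> lexx `|vnorm v * c|).
  by apply: le_trans (sum_mul_le_vnorm v (G s)) _; rewrite ler_wpM2l ?vnorm_ge0.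
have := vnorm_ge0 v; nra.
Qed.

Lemma opnorm_mexpect_le m p (F : S -> 'M[R]_(m, p)) c :
  0 <= c -> (forall i j, measurable_fun setT (fun s => F s i j)) ->
  (forall s, opnorm (F s) <= c) -> opnorm (mexpect mu F) <= c.
Proof.
move=> c_ge0 mF Fc; apply: opnorm_le => // x x_le1.
rewrite mexpect_mulmx => [|i j]; last first.
  exact: integrable_bounded (mF i j) (fun s => le_trans (normr_entry_le_opnorm _ _ _) (Fc s)).
apply: vnorm_mexpect_le => // [i j|s]; first exact: measurable_mulmx_entry.
apply: le_trans (vnorm_mulmx_opnorm _ _) _.
by rewrite -[c]mulr1 ler_pM ?opnorm_ge0 ?vnorm_ge0.
Qed.

End Expectation.

Section MexpectApprox.
Context d (S : measurableType d) (R : realType).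

Lemma opnorm_le_mexpect_approx m p (F : S -> 'M[R]_(m, p)) M c : 0 <= c ->
  (forall i j, measurable_fun setT (fun s => F s i j)) -> (forall s, opnorm (F s) <= c) ->
  (forall a, 0 < a -> exists2 mu : {measure set S -> \bar R},
     mu setT = 1%E & opnorm (mexpect mu F - M) <= a) ->
  opnorm M <= c.
Proof.
move=> c_ge0 mF Fc approx; apply/ler_addgt0Pr => a /approx[mu mu_setT FMa].
rewrite -[M](subKr (mexpect mu F)); apply: le_trans (opnormB _ _) _.
by rewrite lerD // opnorm_mexpect_le.
Qed.

Lemma vnorm_le_mexpect_approx m (G : S -> 'cV[R]_m) v c : 0 <= c ->
  (forall i j, measurable_fun setT (fun s => G s i j)) -> (forall s, vnorm (G s) <= c) ->
  (forall a, 0 < a -> exists2 mu : {measure set S -> \bar R},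
     mu setT = 1%E & vnorm (mexpect mu G - v) <= a) ->
  vnorm v <= c.
Proof.
move=> c_ge0 mG Gc approx; apply/ler_addgt0Pr => a /approx[mu mu_setT Gva].
rewrite -[v](subKr (mexpect mu G)); apply: le_trans (vnormB _ _) _.
by rewrite lerD // vnorm_mexpect_le.
Qed.

End MexpectApprox.

Lemma vnorm_noise_le (R : realType) m p q (A Abar : 'M[R]_(m, p)) (A' Abar' : 'M[R]_(m, q))
    b bbar x y c B :
  opnorm A <= c -> opnorm A' <= c -> vnorm b <= B ->
  opnorm Abar <= c -> opnorm Abar' <= c -> vnorm bbar <= B ->
  vnorm (A *m x + A' *m y - b - (Abar *m x + Abar' *m y - bbar))
    <= 2 * c * (vnorm x + vnorm y) + 2 * B.
Proof.
have affine_le (M : 'M[R]_(m, p)) (M' : 'M[R]_(m, q)) w :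
    opnorm M <= c -> opnorm M' <= c -> vnorm w <= B ->
    vnorm (M *m x + M' *m y - w) <= c * vnorm x + c * vnorm y + B.
  move=> Mc M'c wB; apply: le_trans (vnormB _ _) _; rewrite lerD //.
  apply: le_trans (vnormD _ _) _.
  by rewrite lerD // (le_trans (vnorm_mulmx_opnorm _ _)) // ler_wpM2r ?vnorm_ge0.
move=> Ac A'c bB Abarc Abar'c bbarB; apply: le_trans (vnormB _ _) _.
have := affine_le _ _ _ Ac A'c bB; have := affine_le _ _ _ Abarc Abar'c bbarB.
nra.
Qed.

(* Clearing the denominator [2 lam^2], every coefficient compares favourably once [lam <= 1/4]. *)
Lemma tts_noise_arith (R : realType) (lam col x y z ys B : R) :
  0 < lam <= 4^-1 -> 0 <= B -> 0 <= z -> 0 <= ys ->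
  col <= x + y + 4 * B -> lam * (x - z) <= B + 4^-1 * y -> y <= z + ys ->
  col <= (8 * lam + 1) / (2 * lam) * z + (8 * lam + 1) * (2 * B + ys) / (2 * lam ^+ 2).
Proof.
move=> /andP[lam_gt0 lam_le] B_ge0 z_ge0 ys_ge0 col_le x_le y_le.
have -> : (8 * lam + 1) / (2 * lam) * z + (8 * lam + 1) * (2 * B + ys) / (2 * lam ^+ 2)
    = (8 * lam + 1) * (lam * z + 2 * B + ys) / (2 * lam ^+ 2).
  by field; rewrite gt_eqF.
rewrite ler_pdivlMr ?mulr_gt0 ?exprn_gt0 //.
have lam_ge0 := ltW lam_gt0.
have gap_ge0 : 0 <= 4^-1 - lam by rewrite subr_ge0.
have coef_ge0 : 0 <= lam / 2 + 2 * lam ^+ 2.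
  by rewrite addr_ge0 ?mulr_ge0 ?invr_ge0 ?sqr_ge0.
have := ler_wpM2l (mulr_ge0 (ler0n _ 2) (sqr_ge0 lam)) col_le.
have := ler_wpM2l (mulr_ge0 (ler0n _ 2) lam_ge0) x_le.
have := ler_wpM2l coef_ge0 y_le.
have := mulr_ge0 (mulr_ge0 lam_ge0 B_ge0) gap_ge0.
have := mulr_ge0 (mulr_ge0 lam_ge0 ys_ge0) gap_ge0.
have := mulr_ge0 lam_ge0 z_ge0; have := mulr_ge0 (sqr_ge0 lam) z_ge0.
have := mulr_ge0 lam_ge0 B_ge0; have := mulr_ge0 lam_ge0 ys_ge0.
nra.
Qed.

Section TwoTimeScaleNoise.
Variables (R : realType) (n : nat).
Variables (A11 A12 A21 A22 Abar11 Abar12 Abar21 Abar22 : 'M[R]_n).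
Variables (b1 b2 bbar1 bbar2 X Y Ystar : 'cV[R]_n) (B : R).
Hypotheses (n_gt0 : (0 < n)%N) (B_ge0 : 0 <= B) (Abar11_unit : Abar11 \in unitmx).
Hypotheses (hA11 : opnorm A11 <= 4^-1) (hA12 : opnorm A12 <= 4^-1).
Hypotheses (hA21 : opnorm A21 <= 4^-1) (hA22 : opnorm A22 <= 4^-1).
Hypotheses (hAbar11 : opnorm Abar11 <= 4^-1) (hAbar12 : opnorm Abar12 <= 4^-1).
Hypotheses (hAbar21 : opnorm Abar21 <= 4^-1) (hAbar22 : opnorm Abar22 <= 4^-1).
Hypotheses (hb1 : vnorm b1 <= B) (hb2 : vnorm b2 <= B).
Hypotheses (hbbar1 : vnorm bbar1 <= B) (hbbar2 : vnorm bbar2 <= B).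

Let eps := A11 *m X + A12 *m Y - b1 - (Abar11 *m X + Abar12 *m Y - bbar1).
Let psi := A21 *m X + A22 *m Y - b2 - (Abar21 *m X + Abar22 *m Y - bbar2).
Let Xhat := X - invmx Abar11 *m (bbar1 - Abar12 *m Y).
Let Yhat := Y - Ystar.
Let lam1 := smallest_sv Abar11.

Lemma tts_noise_le :
  vnorm (col_mx eps psi)
    <= (8 * lam1 + 1) / (2 * lam1) * vnorm (col_mx Xhat Yhat)
       + (8 * lam1 + 1) * (2 * B + vnorm Ystar) / (2 * lam1 ^+ 2).
Proof.
have lam1_gt0 : 0 < lam1 := smallest_sv_gt0 n_gt0 Abar11_unit.
have lam1_le : lam1 <= 4^-1 := le_trans (smallest_sv_le_opnorm _ n_gt0) hAbar11.
have [Xhat_le Yhat_le _] := vnorm_col_mx_le Xhat Yhat.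
set z := vnorm (col_mx Xhat Yhat) in Xhat_le Yhat_le *.
have noise_le : vnorm (col_mx eps psi) <= vnorm X + vnorm Y + 4 * B.
  have [_ _ col_le] := vnorm_col_mx_le eps psi.
  have := vnorm_noise_le X Y hA11 hA12 hb1 hAbar11 hAbar12 hbbar1.
  have := vnorm_noise_le X Y hA21 hA22 hb2 hAbar21 hAbar22 hbbar2.
  rewrite -/eps -/psi; lra.
have Y_le : vnorm Y <= z + vnorm Ystar.
  by rewrite -{1}(subrK Ystar Y); apply: le_trans (vnormD _ _) _; rewrite lerD2r.
have X_le : lam1 * (vnorm X - z) <= B + 4^-1 * vnorm Y.
  set W := invmx Abar11 *m (bbar1 - Abar12 *m Y).
  have : vnorm X <= z + vnorm W.
    by rewrite -{1}(subrK W X); apply: le_trans (vnormD _ _) _; rewrite lerD2r.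
  rewrite -lerBlDl => /(ler_wpM2l (ltW lam1_gt0)) /le_trans; apply.
  apply: le_trans (smallest_sv_mul_le _ _) _; rewrite mulKVmx //.
  apply: le_trans (vnormB _ _) _; rewrite lerD //.
  by apply: le_trans (vnorm_mulmx_opnorm _ _) _; rewrite ler_wpM2r ?vnorm_ge0.
apply: tts_noise_arith B_ge0 (vnorm_ge0 _) (vnorm_ge0 _) noise_le X_le Y_le.
by rewrite lam1_gt0.
Qed.

End TwoTimeScaleNoise.
Theorem lemma7 (R : realType) (n : nat) (d : measure_display)
  (S : measurableType d)
  (* Markov chain: one-step kernel P, k-step kernels Pn, initial law mu0,
     marginal laws law k of xi_k *)
  (P : R.-pker S ~> S) (Pn : nat -> R.-pker S ~> S)
  (mu0 : probability S R) (law : nat -> probability S R)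
  (A11 A12 A21 A22 : S -> 'M[R]_n) (b1 b2 : S -> 'cV[R]_n)
  (Abar11 Abar12 Abar21 Abar22 : 'M[R]_n) (bbar1 bbar2 : 'cV[R]_n)
  (tau : R -> nat) (C : R) (B : R)
  (alpha beta : nat -> R) (Kstar : nat)
  (Xstar Ystar : 'cV[R]_n) (X0 Y0 : 'cV[R]_n) (xi : nat -> S) :
  (0 < n)%N ->
  (* chain structure *)
  (forall x (E : set S), measurable E -> Pn 0%N x E = \d_x E) ->
  (forall k x (E : set S), measurable E ->
     Pn k.+1 x E = (\int[P x]_y Pn k y E)%E) ->
  (forall k (E : set S), measurable E ->
     law k E = (\int[mu0]_x Pn k x E)%E) ->
  (* measurability of the data *)
  (forall i j, measurable_fun setT (fun s => A11 s i j)) ->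
  (forall i j, measurable_fun setT (fun s => A12 s i j)) ->
  (forall i j, measurable_fun setT (fun s => A21 s i j)) ->
  (forall i j, measurable_fun setT (fun s => A22 s i j)) ->
  (forall i j, measurable_fun setT (fun s => b1 s i j)) ->
  (forall i j, measurable_fun setT (fun s => b2 s i j)) ->
  (* the limits Abar_ij = lim E[A_ij(xi_k)], bbar_i = lim E[b_i(xi_k)] *)
  (forall i j, (fun k => mexpect (law k) A11 i j) @ \oo --> Abar11 i j) ->
  (forall i j, (fun k => mexpect (law k) A12 i j) @ \oo --> Abar12 i j) ->
  (forall i j, (fun k => mexpect (law k) A21 i j) @ \oo --> Abar21 i j) ->
  (forall i j, (fun k => mexpect (law k) A22 i j) @ \oo --> Abar22 i j) ->
  (forall i j, (fun k => mexpect (law k) b1 i j) @ \oo --> bbar1 i j) ->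
  (forall i j, (fun k => mexpect (law k) b2 i j) @ \oo --> bbar2 i j) ->
  (* positive definiteness of Abar11 and of the Schur complement Delta *)
  (forall x : 'cV[R]_n, x != 0 -> 0 < (x^T *m Abar11 *m x) 0 0) ->
  (forall x : 'cV[R]_n, x != 0 ->
     0 < (x^T *m (Abar22 - Abar21 *m invmx Abar11 *m Abar12) *m x) 0 0) ->
  (* mixing time tau(a) = C log(1/a) (rounded up to an integer) *)
  0 < C ->
  (forall a, 0 < a < 1 -> ((tau a)%:R : R) = (Num.ceil (C * ln a^-1))%:~R) ->
  (forall a, 0 < a -> forall k x, (tau a <= k)%N ->
     [/\ opnorm (mexpect (Pn k x) A11 - Abar11) <= a,
         opnorm (mexpect (Pn k x) A12 - Abar12) <= a,
         opnorm (mexpect (Pn k x) A21 - Abar21) <= a,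
         opnorm (mexpect (Pn k x) A22 - Abar22) <= a &
         vnorm (mexpect (Pn k x) b1 - bbar1) <= a /\
         vnorm (mexpect (Pn k x) b2 - bbar2) <= a]) ->
  (* assumption (A2) *)
  0 < B ->
  (forall s, vnorm (b1 s) <= B /\ vnorm (b2 s) <= B) ->
  (forall s, [/\ opnorm (A11 s) <= 4^-1, opnorm (A12 s) <= 4^-1,
                 opnorm (A21 s) <= 4^-1 & opnorm (A22 s) <= 4^-1]) ->
  (* (Xstar, Ystar) solves the averaged linear system *)
  Abar11 *m Xstar + Abar12 *m Ystar = bbar1 ->
  Abar21 *m Xstar + Abar22 *m Ystar = bbar2 ->
  (* step sizes: nonnegative, nonincreasing *)
  (forall k, 0 <= alpha k) -> (forall k, alpha k.+1 <= alpha k) ->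
  (forall k, 0 <= beta k) -> (forall k, beta k.+1 <= beta k) ->
  (* K* *)
  (0 < Kstar)%N ->
  (forall k, (Kstar <= k)%N ->
     \sum_((k - tau (alpha k))%N <= t < k.+1) alpha t
       <= (tau (alpha k))%:R * alpha (k - tau (alpha k))%N
     /\ (tau (alpha k))%:R * alpha (k - tau (alpha k))%N <= ln 2) ->
  forall k, (Kstar <= k)%N ->
  let XY := tts_iter A11 A12 A21 A22 b1 b2 alpha beta xi X0 Y0 k in
  let X := XY.1 in
  let Y := XY.2 in
  let eps := A11 (xi k) *m X + A12 (xi k) *m Y - b1 (xi k)
             - (Abar11 *m X + Abar12 *m Y - bbar1) in
  let psi := A21 (xi k) *m X + A22 (xi k) *m Y - b2 (xi k)
             - (Abar21 *m X + Abar22 *m Y - bbar2) in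
  let Xhat := X - invmx Abar11 *m (bbar1 - Abar12 *m Y) in
  let Yhat := Y - Ystar in
  let Zhat := col_mx Xhat Yhat in
  let lam1 := smallest_sv Abar11 in
  vnorm (col_mx eps psi)
    <= (8 * lam1 + 1) / (2 * lam1) * vnorm Zhat
       + (8 * lam1 + 1) * (2 * B + vnorm Ystar) / (2 * lam1 ^+ 2).
Proof.
move=> n_gt0 _ _ _ mA11 mA12 mA21 mA22 mb1 mb2 _ _ _ _ _ _ Abar11_posdef _ _ _ mix.
move=> B_gt0 hb hA _ _ _ _ _ _ _ _ k _.
pose mu a := Pn (tau a) (xi 0%N).
have mu_setT a : mu a setT = 1%E by exact: prob_kernel.
have mixP a (a_gt0 : 0 < a) := mix a a_gt0 _ (xi 0%N) (leqnn _).
have hAbar11 : opnorm Abar11 <= 4^-1.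
  apply: (opnorm_le_mexpect_approx _ mA11) => // [s|a /mixP[? _ _ _ _]]; first by case: (hA s).
  by exists (mu a).
have hAbar12 : opnorm Abar12 <= 4^-1.
  apply: (opnorm_le_mexpect_approx _ mA12) => // [s|a /mixP[_ ? _ _ _]]; first by case: (hA s).
  by exists (mu a).
have hAbar21 : opnorm Abar21 <= 4^-1.
  apply: (opnorm_le_mexpect_approx _ mA21) => // [s|a /mixP[_ _ ? _ _]]; first by case: (hA s).
  by exists (mu a).
have hAbar22 : opnorm Abar22 <= 4^-1.
  apply: (opnorm_le_mexpect_approx _ mA22) => // [s|a /mixP[_ _ _ ? _]]; first by case: (hA s).
  by exists (mu a).
have hbbar1 : vnorm bbar1 <= B.
  apply: (vnorm_le_mexpect_approx _ mb1) => // [|s|a /mixP[_ _ _ _ [? _]]]; [exact: ltW|by case: (hb s)|].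
  by exists (mu a).
have hbbar2 : vnorm bbar2 <= B.
  apply: (vnorm_le_mexpect_approx _ mb2) => // [|s|a /mixP[_ _ _ _ [_ ?]]]; [exact: ltW|by case: (hb s)|].
  by exists (mu a).
have [hA11 hA12 hA21 hA22] := hA (xi k); have [hb1 hb2] := hb (xi k).
exact: (tts_noise_le _ _ Ystar n_gt0 (ltW B_gt0) (posdef_unitmx Abar11_posdef)
  hA11 hA12 hA21 hA22 hAbar11 hAbar12 hAbar21 hAbar22 hb1 hb2 hbbar1 hbbar2).
Qed.
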